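(* Let $(X,d)$ be a Polish metric space, viewed as a structure in the metric signature. Then $X$ has Scott rank $0$ if and only if $X$ is ultrahomogeneous.
   Context: A metric space $(X,d)$ is viewed as a first-order structure in the signature $\{R_q : q\in\mathbb{Q}^+\}$ of binary relation symbols, where $R_q(x,y)$ holds iff $d(x,y)<q$. For a structure $M$ and finite tuples $\bar a,\bar b$ of the same length from $M$, define $\bar a\equiv_\alpha\bar b$ by induction on ordinals $\alpha$: $\bar a\equiv_0\bar b$ iff $\bar a,\bar b$ have the same quantifier-free type; for limit $\alpha$, $\bar a\equiv_\alpha\bar b$ iff $\bar a\equiv_\beta\bar b$ for all $\beta<\alpha$; $\bar a\equiv_{\alpha+1}\bar b$ iff for every $x\in M$ there is $y\in M$ with $\bar a x\equiv_\alpha\bar b y$, and for every $y\in M$ there is $x\in M$ with $\bar a x\equiv_\alpha \bar b y$. The Scott rank of $M$ is the least ordinal $\alpha$ such that for all finite tuples $\bar a,\bar b$ from $M$, $\bar a\equiv_\alpha\bar b$ implies $\bar a\equiv_{\alpha+1}\bar b$. A metric space $X$ is ultrahomogeneous if every isometry between finite subsets of $X$ extends to an isometry of $X$ onto itself. *)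

From Stdlib Require Import Reals QArith Qreals List.
Open Scope R_scope.

Definition is_metric {X : Type} (d : X -> X -> R) : Prop :=
  (forall x y, 0 <= d x y) /\
  (forall x y, d x y = 0 <-> x = y) /\
  (forall x y, d x y = d y x) /\
  (forall x y z, d x z <= d x y + d y z).

Definition cauchy_seq {X : Type} (d : X -> X -> R) (u : nat -> X) : Prop :=
  forall eps, 0 < eps -> exists N, forall m n, (N <= m)%nat -> (N <= n)%nat ->
    d (u m) (u n) < eps.

Definition converges_to {X : Type} (d : X -> X -> R) (u : nat -> X) (l : X) : Prop :=
  forall eps, 0 < eps -> exists N, forall n, (N <= n)%nat -> d (u n) l < eps.

Definition complete_metric {X : Type} (d : X -> X -> R) : Prop :=
  forall u, cauchy_seq d u -> exists l, converges_to d u l.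

(** Separable: has a countable dense subset (the empty space is separable). *)
Definition separable_metric {X : Type} (d : X -> X -> R) : Prop :=
  (forall x : X, False) \/
  exists s : nat -> X, forall x eps, 0 < eps -> exists n, d x (s n) < eps.

Definition polish_metric {X : Type} (d : X -> X -> R) : Prop :=
  is_metric d /\ complete_metric d /\ separable_metric d.

(** Tuples of length n are represented by a : nat -> X, using indices i < n.
    [snoc a n x] is the (n+1)-tuple a x. *)
Definition snoc {X : Type} (a : nat -> X) (n : nat) (x : X) : nat -> X :=
  fun i => if Nat.eqb i n then x else a i.

(** Same quantifier-free type in the signature {R_q : q in Q+} (with equality):
    all atomic formulas x_i = x_j and R_q(x_i, x_j) agree. *)
Definition qf_equiv {X : Type} (d : X -> X -> R) (n : nat) (a b : nat -> X) : Prop :=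
  forall i j, (i < n)%nat -> (j < n)%nat ->
    (a i = a j <-> b i = b j) /\
    (forall q : Q, (0 < q)%Q -> (d (a i) (a j) < Q2R q <-> d (b i) (b j) < Q2R q)).

Fixpoint bf_equiv {X : Type} (d : X -> X -> R) (k : nat) (n : nat) (a b : nat -> X) : Prop :=
  match k with
  | O => qf_equiv d n a b
  | S k' =>
      (forall x, exists y, bf_equiv d k' (S n) (snoc a n x) (snoc b n y)) /\
      (forall y, exists x, bf_equiv d k' (S n) (snoc a n x) (snoc b n y))
  end.

Definition scott_rank_zero {X : Type} (d : X -> X -> R) : Prop :=
  forall n (a b : nat -> X), bf_equiv d 0 n a b -> bf_equiv d 1 n a b.

(** A finite subset is given by a list A;
    a map f that preserves distances on A is an isometry from A onto f(A). *)
Definition ultrahomogeneous {X : Type} (d : X -> X -> R) : Prop :=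
  forall (A : list X) (f : X -> X),
    (forall x y, In x A -> In y A -> d (f x) (f y) = d x y) ->
    exists g : X -> X,
      (forall x y, d (g x) (g y) = d x y) /\
      (forall y, exists x, g x = y) /\
      (forall x, In x A -> g x = f x).

From Stdlib Require Import Reals QArith Qreals List Lia Lra ClassicalEpsilon.
Open Scope R_scope.

(* Since rational distance thresholds separate reals, two tuples have the same
   quantifier-free type iff they are isometric.  Scott rank 0 thus says that
   every finite partial isometry admits one-point extensions on either side.
   Conversely, an isometry of X extending a finite partial isometry carries
   witnesses of one tuple to witnesses of the other.  For the forward direction,
   a back-and-forth along a dense sequence, alternately adding its points to the
   domain and to the range, extends a finite partial isometry to an isometry
   between two dense sequences; by completeness this extends to an isometry of
   X, which is onto because the range sequence is dense as well. *)

Lemma exists_pos_Q_between (r s : R) :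
  0 <= r -> r < s -> exists q : Q, (0 < q)%Q /\ r < Q2R q < s.
Proof.
  intros Hr Hrs.
  destruct (archimed (/ (s - r))) as [HN _].
  set (N := up (/ (s - r))) in *.
  assert (Hinv : 0 < / (s - r)) by (apply Rinv_0_lt_compat; lra).
  assert (HNpos : 0 < IZR N) by lra.
  assert (HNz : (0 < N)%Z) by (apply lt_IZR; exact HNpos).
  destruct (archimed (r * IZR N)) as [Hz1 Hz2].
  set (z := up (r * IZR N)) in *.
  exists (Qmake z (Z.to_pos N)).
  assert (HQ : Q2R (Qmake z (Z.to_pos N)) = IZR z / IZR N).
  { unfold Q2R; simpl. rewrite Z2Pos.id by lia. reflexivity. }
  assert (Hlo : r < IZR z / IZR N).
  { apply (Rmult_lt_reg_r (IZR N)); [lra|].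
    unfold Rdiv. rewrite Rmult_assoc, Rinv_l by lra. lra. }
  assert (Hhi : IZR z / IZR N < s).
  { assert (Hstep : / IZR N < s - r).
    { rewrite <- (Rinv_inv (s - r)). apply Rinv_lt_contravar; [|lra].
      apply Rmult_lt_0_compat; lra. }
    assert (IZR z / IZR N <= r + / IZR N).
    { apply (Rmult_le_reg_r (IZR N)); [lra|]. unfold Rdiv.
      rewrite Rmult_assoc, Rinv_l by lra.
      rewrite Rmult_plus_distr_r, Rinv_l by lra. lra. }
    lra. }
  split; [|rewrite HQ; lra].
  apply Rlt_Qlt. rewrite HQ. unfold Q2R; simpl. lra.
Qed.

Lemma eq_of_pos_Q_cuts (r s : R) : 0 <= r -> 0 <= s ->
  (forall q : Q, (0 < q)%Q -> (r < Q2R q <-> s < Q2R q)) -> r = s.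
Proof.
  intros Hr Hs Hcut. destruct (Rtotal_order r s) as [Hlt|[Heq|Hgt]]; auto.
  - destruct (exists_pos_Q_between r s Hr Hlt) as [q [Hq [H1 H2]]].
    apply Hcut in H1; [lra|auto].
  - destruct (exists_pos_Q_between s r Hs Hgt) as [q [Hq [H1 H2]]].
    apply Hcut in H1; [lra|auto].
Qed.

Lemma inv_INR_succ_eventually_lt (eps : R) : 0 < eps ->
  exists N, forall m, (N <= m)%nat -> / (INR m + 1) < eps.
Proof.
  intros He. destruct (archimed_cor1 eps He) as [N [HN HNpos]]. exists N.
  intros m Hm. apply le_INR in Hm. apply lt_INR in HNpos. simpl in HNpos.
  eapply Rle_lt_trans; [|exact HN]. apply Rinv_le_contravar; lra.
Qed.

Section Metric.
Context {X : Type} (d : X -> X -> R).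
Hypothesis Hd : is_metric d.

Lemma dist_ge0 x y : 0 <= d x y.
Proof. apply Hd. Qed.

Lemma dist_eq0 x y : d x y = 0 <-> x = y.
Proof. apply Hd. Qed.

Lemma dist_sym x y : d x y = d y x.
Proof. apply Hd. Qed.

Lemma dist_triangle x y z : d x z <= d x y + d y z.
Proof. apply Hd. Qed.

Lemma dist_xx x : d x x = 0.
Proof. apply dist_eq0. reflexivity. Qed.

Definition tuple_isometric (n : nat) (a b : nat -> X) : Prop :=
  forall i j, (i < n)%nat -> (j < n)%nat -> d (a i) (a j) = d (b i) (b j).

Lemma qf_equiv_iff_isometric n a b : qf_equiv d n a b <-> tuple_isometric n a b.
Proof.
  split.
  - intros Hqf i j Hi Hj. apply eq_of_pos_Q_cuts; try apply dist_ge0.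
    apply (Hqf i j Hi Hj).
  - intros Hiso i j Hi Hj. split.
    + rewrite <- !dist_eq0, Hiso by auto. tauto.
    + intros q _. rewrite Hiso by auto. tauto.
Qed.

Lemma isometric_snoc n a b x y : tuple_isometric n a b ->
  (forall i, (i < n)%nat -> d (a i) x = d (b i) y) ->
  tuple_isometric (S n) (snoc a n x) (snoc b n y).
Proof.
  intros Hiso Hxy i j Hi Hj. unfold snoc.
  destruct (Nat.eqb_spec i n), (Nat.eqb_spec j n).
  - rewrite !dist_xx. reflexivity.
  - rewrite dist_sym, (dist_sym y). apply Hxy. lia.
  - apply Hxy. lia.
  - apply Hiso; lia.
Qed.

Lemma scott_rank_zero_isometric_extend : scott_rank_zero d ->
  forall n a b, tuple_isometric n a b ->
  (forall x, exists y, tuple_isometric (S n) (snoc a n x) (snoc b n y)) /\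
  (forall y, exists x, tuple_isometric (S n) (snoc a n x) (snoc b n y)).
Proof.
  intros Hsr n a b Hiso. apply qf_equiv_iff_isometric in Hiso.
  destruct (Hsr n a b Hiso) as [Hforth Hback]. split.
  - intros x. destruct (Hforth x) as [y Hy]. exists y.
    apply qf_equiv_iff_isometric. exact Hy.
  - intros y. destruct (Hback y) as [x Hx]. exists x.
    apply qf_equiv_iff_isometric. exact Hx.
Qed.

Lemma ultrahomogeneous_scott_rank_zero : ultrahomogeneous d -> scott_rank_zero d.
Proof.
  intros Huh n a b Hqf. apply qf_equiv_iff_isometric in Hqf.
  set (f := fun x =>
    epsilon (inhabits x) (fun y => exists i, (i < n)%nat /\ a i = x /\ b i = y)).
  assert (Hf : forall i, (i < n)%nat -> f (a i) = b i).
  { intros i Hi. unfold f.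
    destruct (epsilon_spec (inhabits (a i))
                (fun y => exists j, (j < n)%nat /\ a j = a i /\ b j = y))
      as [j [Hj [Haj <-]]].
    { exists (b i), i. auto. }
    apply dist_eq0. rewrite <- (Hqf j i Hj Hi), Haj. apply dist_xx. }
  assert (Hdom : forall x, In x (map a (seq 0 n)) -> exists i, (i < n)%nat /\ a i = x).
  { intros x Hx. apply in_map_iff in Hx. destruct Hx as [i [<- Hi]].
    apply in_seq in Hi. exists i. split; [lia|reflexivity]. }
  destruct (Huh (map a (seq 0 n)) f) as [g [Hgiso [Hgonto Hgf]]].
  { intros x y Hx Hy.
    destruct (Hdom x Hx) as [i [Hi <-]], (Hdom y Hy) as [j [Hj <-]].
    rewrite !Hf by auto. symmetry. apply Hqf; auto. }
  assert (Hga : forall i, (i < n)%nat -> g (a i) = b i).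
  { intros i Hi. rewrite Hgf; [apply Hf; auto|]. apply in_map, in_seq. lia. }
  assert (Hwitness : forall x, tuple_isometric (S n) (snoc a n x) (snoc b n (g x))).
  { intros x. apply isometric_snoc; auto.
    intros i Hi. rewrite <- Hga by auto. symmetry. apply Hgiso. }
  split.
  - intros x. exists (g x). apply qf_equiv_iff_isometric, Hwitness.
  - intros y. destruct (Hgonto y) as [x <-]. exists x.
    apply qf_equiv_iff_isometric, Hwitness.
Qed.

Definition dense_seq (u : nat -> X) : Prop :=
  forall x eps, 0 < eps -> exists i, d x (u i) < eps.

Lemma dense_seq_dist_inj (w : nat -> X) y y' : dense_seq w ->
  (forall i, d (w i) y = d (w i) y') -> y = y'.
Proof.
  intros Hw Hyy'. apply dist_eq0, cond_eq. intros eps He.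
  rewrite Rminus_0_r, Rabs_pos_eq by apply dist_ge0.
  destruct (Hw y (eps / 2)) as [i Hi]; [lra|].
  pose proof (dist_triangle y (w i) y'). rewrite (dist_sym y (w i)) in *.
  rewrite Hyy' in *. lra.
Qed.

Hypothesis Hcomplete : complete_metric d.

(* Approximate x by points u (idx k) within 1/(k+1); their partners v (idx k)
   form a Cauchy sequence, whose limit realizes the distances of x. *)
Lemma isometric_dense_seq_realize (u v : nat -> X) :
  (forall i j, d (u i) (u j) = d (v i) (v j)) -> dense_seq u ->
  forall x, exists y, forall i, d (v i) y = d (u i) x.
Proof.
  intros Huv Hu x.
  set (idx := fun k => epsilon (inhabits 0%nat) (fun i => d x (u i) < / (INR k + 1))).
  assert (Hidx : forall k, d x (u (idx k)) < / (INR k + 1)).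
  { intros k. apply epsilon_spec, Hu.
    apply Rinv_0_lt_compat. pose proof (pos_INR k). lra. }
  destruct (Hcomplete (fun k => v (idx k))) as [y Hy].
  { intros eps He. destruct (inv_INR_succ_eventually_lt (eps / 2)) as [N HN]; [lra|].
    exists N. intros m n Hm Hn. rewrite <- Huv.
    pose proof (HN m Hm). pose proof (HN n Hn). pose proof (Hidx m). pose proof (Hidx n).
    pose proof (dist_triangle (u (idx m)) x (u (idx n))).
    rewrite (dist_sym (u (idx m)) x) in *. lra. }
  exists y. intros i. apply cond_eq. intros eps He.
  destruct (Hy (eps / 2)) as [N1 H1]; [lra|].
  destruct (inv_INR_succ_eventually_lt (eps / 2)) as [N2 H2]; [lra|].
  set (k := (N1 + N2)%nat).
  specialize (H1 k ltac:(unfold k; lia)). specialize (H2 k ltac:(unfold k; lia)).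
  pose proof (Hidx k). simpl in H1.
  pose proof (dist_triangle (v i) (v (idx k)) y).
  pose proof (dist_triangle (u i) (u (idx k)) x).
  pose proof (dist_triangle (u i) x (u (idx k))).
  pose proof (dist_triangle (v i) y (v (idx k))).
  rewrite <- Huv in *. rewrite (dist_sym y (v (idx k))), (dist_sym (u (idx k)) x) in *.
  apply Rabs_def1; lra.
Qed.

Lemma isometric_dense_seq_extend (u v : nat -> X) :
  (forall i j, d (u i) (u j) = d (v i) (v j)) -> dense_seq u -> dense_seq v ->
  exists g : X -> X, (forall x y, d (g x) (g y) = d x y) /\
    (forall y, exists x, g x = y) /\ (forall j, g (u j) = v j).
Proof.
  intros Huv Hu Hv.
  set (realizes := fun x y => forall i, d (v i) y = d (u i) x).
  set (g := fun x => epsilon (inhabits x) (realizes x)).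
  assert (Hg : forall x, realizes x (g x)).
  { intros x. apply epsilon_spec, isometric_dense_seq_realize; auto. }
  exists g. split; [|split].
  - intros x y. apply cond_eq. intros eps He.
    destruct (Hu x (eps / 2)) as [i Hi]; [lra|].
    pose proof (Hg x i). pose proof (Hg y i).
    pose proof (dist_triangle (g x) (v i) (g y)). pose proof (dist_triangle (u i) x y).
    pose proof (dist_triangle x (u i) y). pose proof (dist_triangle (v i) (g x) (g y)).
    rewrite (dist_sym (g x) (v i)), (dist_sym x (u i)) in *.
    apply Rabs_def1; lra.
  - intros y.
    destruct (isometric_dense_seq_realize v u (fun i j => eq_sym (Huv i j)) Hv y)
      as [x Hx].
    exists x. apply (dense_seq_dist_inj v); auto. intros i. rewrite Hg. auto.
  - intros j. apply (dense_seq_dist_inj v); auto. intros i. rewrite Hg. auto.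
Qed.

End Metric.

Section BackAndForth.
Context {X : Type} (d : X -> X -> R) (s : nat -> X) (n0 : nat) (a0 b0 : nat -> X).

Definition forth_pick n (a b : nat -> X) x :=
  epsilon (inhabits x) (fun y => tuple_isometric d (S n) (snoc a n x) (snoc b n y)).

Definition back_pick n (a b : nat -> X) y :=
  epsilon (inhabits y) (fun x => tuple_isometric d (S n) (snoc a n x) (snoc b n y)).

(* Stage k holds tuples of length n0 + k; even steps put s (k/2) into the domain,
   odd steps put it into the range. *)
Fixpoint bf_stage (k : nat) : (nat -> X) * (nat -> X) :=
  match k with
  | O => (a0, b0)
  | S k' =>
    let a := fst (bf_stage k') in
    let b := snd (bf_stage k') in
    let n := (n0 + k')%nat in
    let x := s (Nat.div2 k') in
    if Nat.even k' then (snoc a n x, snoc b n (forth_pick n a b x))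
    else (snoc a n (back_pick n a b x), snoc b n x)
  end.

Lemma bf_stage_isometric : is_metric d -> scott_rank_zero d ->
  tuple_isometric d n0 a0 b0 ->
  forall k, tuple_isometric d (n0 + k) (fst (bf_stage k)) (snd (bf_stage k)).
Proof.
  intros Hd Hsr H0 k. induction k as [|k IH].
  - rewrite Nat.add_0_r. exact H0.
  - rewrite Nat.add_succ_r.
    destruct (scott_rank_zero_isometric_extend d Hd Hsr _ _ _ IH) as [Hforth Hback].
    simpl. destruct (Nat.even k); simpl.
    + unfold forth_pick. apply epsilon_spec, Hforth.
    + unfold back_pick. apply epsilon_spec, Hback.
Qed.

Lemma bf_stage_succ_agree k i : (i < n0 + k)%nat ->
  fst (bf_stage (S k)) i = fst (bf_stage k) i /\
  snd (bf_stage (S k)) i = snd (bf_stage k) i.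
Proof.
  intros Hi. simpl. assert (Hneq : Nat.eqb i (n0 + k) = false) by (apply Nat.eqb_neq; lia).
  destruct (Nat.even k); simpl; unfold snoc; rewrite Hneq; auto.
Qed.

Lemma bf_stage_agree k l i : (i < n0 + k)%nat ->
  fst (bf_stage (k + l)) i = fst (bf_stage k) i /\
  snd (bf_stage (k + l)) i = snd (bf_stage k) i.
Proof.
  intros Hi. induction l as [|l IH].
  - rewrite Nat.add_0_r. auto.
  - rewrite Nat.add_succ_r.
    destruct (bf_stage_succ_agree (k + l) i ltac:(lia)) as [-> ->]. exact IH.
Qed.

Definition bf_left i := fst (bf_stage (S i)) i.
Definition bf_right i := snd (bf_stage (S i)) i.

Lemma bf_limit_agree k i : (i < n0 + k)%nat ->
  bf_left i = fst (bf_stage k) i /\ bf_right i = snd (bf_stage k) i.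
Proof.
  intros Hi. unfold bf_left, bf_right.
  destruct (bf_stage_agree (S i) k i ltac:(lia)) as [<- <-].
  destruct (bf_stage_agree k (S i) i Hi) as [<- <-].
  rewrite Nat.add_comm. auto.
Qed.

Lemma bf_limit_isometric : is_metric d -> scott_rank_zero d ->
  tuple_isometric d n0 a0 b0 ->
  forall i j, d (bf_left i) (bf_left j) = d (bf_right i) (bf_right j).
Proof.
  intros Hd Hsr H0 i j.
  destruct (bf_limit_agree (S (i + j)) i ltac:(lia)) as [-> ->].
  destruct (bf_limit_agree (S (i + j)) j ltac:(lia)) as [-> ->].
  apply bf_stage_isometric; auto; lia.
Qed.

Lemma bf_limit_init i : (i < n0)%nat -> bf_left i = a0 i /\ bf_right i = b0 i.
Proof. intros Hi. apply (bf_limit_agree 0). lia. Qed.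

Lemma bf_left_even m : bf_left (n0 + 2 * m) = s m.
Proof.
  destruct (bf_limit_agree (S (2 * m)) (n0 + 2 * m) ltac:(lia)) as [-> _].
  assert (Heven : Nat.even (2 * m) = true) by (rewrite Nat.even_mul; reflexivity).
  assert (Hhalf : Nat.div2 (2 * m) = m).
  { rewrite Nat.div2_div, Nat.mul_comm, Nat.div_mul; lia. }
  cbn [bf_stage]. rewrite Heven, Hhalf. cbn [fst].
  unfold snoc. rewrite Nat.eqb_refl. reflexivity.
Qed.

Lemma bf_right_odd m : bf_right (n0 + S (2 * m)) = s m.
Proof.
  destruct (bf_limit_agree (S (S (2 * m))) (n0 + S (2 * m)) ltac:(lia)) as [_ ->].
  assert (Hodd : Nat.even (S (2 * m)) = false).
  { rewrite Nat.even_succ, Nat.odd_mul. reflexivity. }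
  cbn [bf_stage]. rewrite Hodd, Nat.div2_succ_double. cbn [snd].
  unfold snoc. rewrite Nat.eqb_refl. reflexivity.
Qed.

End BackAndForth.

Lemma scott_rank_zero_ultrahomogeneous (X : Type) (d : X -> X -> R) :
  polish_metric d -> scott_rank_zero d -> ultrahomogeneous d.
Proof.
  intros [Hd [Hcomplete [Hempty | [s Hs]]]] Hsr A f Hf.
  { exists (fun x => x). split; [|split]; auto.
    - intros y. exists y. reflexivity.
    - intros x. destruct (Hempty x). }
  set (n0 := length A). set (a0 := fun i => nth i A (s 0%nat)).
  set (b0 := fun i => f (a0 i)).
  assert (H0 : tuple_isometric d n0 a0 b0).
  { intros i j Hi Hj. symmetry. apply Hf; apply nth_In; auto. }
  assert (Hleft : dense_seq d (bf_left d s n0 a0 b0)).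
  { intros x eps He. destruct (Hs x eps He) as [m Hm]. exists (n0 + 2 * m)%nat.
    rewrite bf_left_even. exact Hm. }
  assert (Hright : dense_seq d (bf_right d s n0 a0 b0)).
  { intros x eps He. destruct (Hs x eps He) as [m Hm]. exists (n0 + S (2 * m))%nat.
    rewrite bf_right_odd. exact Hm. }
  destruct (isometric_dense_seq_extend d Hd Hcomplete _ _
              (bf_limit_isometric d s n0 a0 b0 Hd Hsr H0) Hleft Hright)
    as [g [Hgiso [Hgonto Hgext]]].
  exists g. split; [|split]; auto.
  intros x Hx. destruct (In_nth A x (s 0%nat) Hx) as [i [Hi <-]].
  destruct (bf_limit_init d s n0 a0 b0 i Hi) as [Hl Hr].
  change (nth i A (s 0%nat)) with (a0 i). rewrite <- Hl, Hgext, Hr, Hl. reflexivity.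
Qed.

Theorem mainTheorem1 (X : Type) (d : X -> X -> R) (Hpol : polish_metric d) :
  scott_rank_zero d <-> ultrahomogeneous d.
Proof.
  split.
  - apply scott_rank_zero_ultrahomogeneous. exact Hpol.
  - apply ultrahomogeneous_scott_rank_zero. apply Hpol.
Qed.
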